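(* Let $G=([n],E)$ be a simple graph. Then $\varepsilon(G)\le n!\,\mathrm{Vol}(\mathrm{Stab}(G))$, where $\mathrm{Vol}$ is $n$-dimensional Lebesgue volume.
   Context: For an undirected simple graph $G=(V,E)$, $\varepsilon(G)$ denotes the maximum, over all acyclic orientations of $E$, of the number of linear extensions of the partial order induced on $V$ (where $u<v$ iff there is a directed path from $u$ to $v$; a linear extension of a poset on an $n$-element set is an order-preserving bijection onto $[n]$). The stable polytope $\mathrm{Stab}(G)\subseteq\mathbb{R}^n$ is the convex hull of the vectors $e_I=\sum_{i\in I}e_i$ over all stable (independent) sets $I$ of $G$, where $e_1,\dots,e_n$ is the standard basis (and $e_\emptyset=0$). *)

From Stdlib Require Import Reals.
From mathcomp Require Import all_boot perm.
Set Implicit Arguments. Unset Strict Implicit. Unset Printing Implicit Defensive.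

Definition simple_graph (n : nat) (e : rel 'I_n) : Prop :=
  (forall x, e x x = false) /\ (forall x y, e x y = e y x).

Definition arcs_rel (n : nat) (O : {set 'I_n * 'I_n}) : rel 'I_n :=
  fun u v => (u, v) \in O.

Definition acyclic_orientation (n : nat) (e : rel 'I_n) (O : {set 'I_n * 'I_n}) : bool :=
  [forall u, forall v, ((u, v) \in O) ==> e u v] &&
  [forall u, forall v, e u v ==> (((u, v) \in O) (+) ((v, u) \in O))] &&
  [forall u, forall v, ((u, v) \in O) ==> ~~ connect (arcs_rel O) v u].

Definition ind_lt (n : nat) (O : {set 'I_n * 'I_n}) (u v : 'I_n) : bool :=
  (u != v) && connect (arcs_rel O) u v.

Definition n_linext (n : nat) (O : {set 'I_n * 'I_n}) : nat :=
  #|[set s : {perm 'I_n} | [forall u, forall v, ind_lt O u v ==> (s u < s v)]]|.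

Definition eps (n : nat) (e : rel 'I_n) : nat :=
  \max_(O : {set 'I_n * 'I_n} | acyclic_orientation e O) n_linext O.

Definition stable (n : nat) (e : rel 'I_n) (I : {set 'I_n}) : bool :=
  [forall x in I, forall y in I, ~~ e x y].

Definition sumR (A : Type) (l : seq A) (f : A -> R) : R :=
  foldr (fun a acc => Rplus (f a) acc) R0 l.
Definition prodR (A : Type) (l : seq A) (f : A -> R) : R :=
  foldr (fun a acc => Rmult (f a) acc) R1 l.

(* Stab(G) = conv { e_I : I stable } in R^n (points are functions 'I_n -> R) *)
Definition in_Stab (n : nat) (e : rel 'I_n) (x : 'I_n -> R) : Prop :=
  exists lam : {set 'I_n} -> R,
    (forall I, Rle R0 (lam I)) /\
    (forall I, ~~ stable e I -> lam I = R0) /\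
    sumR (enum {set 'I_n}) lam = R1 /\
    (forall i, x i = sumR (enum {set 'I_n}) (fun I => if i \in I then lam I else R0)).

Definition in_box (n : nat) (bx : ('I_n -> R) * ('I_n -> R)) (x : 'I_n -> R) : Prop :=
  forall i, Rle (bx.1 i) (x i) /\ Rle (x i) (bx.2 i).
Definition box_vol (n : nat) (bx : ('I_n -> R) * ('I_n -> R)) : R :=
  prodR (enum 'I_n) (fun i => Rmax R0 (Rminus (bx.2 i) (bx.1 i))).

Definition box_cover_sum (n : nat) (S : ('I_n -> R) -> Prop) (r : R) : Prop :=
  exists l : seq (('I_n -> R) * ('I_n -> R)),
    (forall x, S x -> exists bx, List.In bx l /\ in_box bx x) /\
    r = sumR l (@box_vol n).

(* v is the n-dimensional volume of S, defined as the Jordan outer content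
   (infimum of total volumes of finite closed-box covers). For compact S
   (e.g. a polytope) this coincides with the Lebesgue measure. *)
Definition is_volume (n : nat) (S : ('I_n -> R) -> Prop) (v : R) : Prop :=
  (forall r, box_cover_sum S r -> Rle v r) /\
  (forall w, (forall r, box_cover_sum S r -> Rle w r) -> Rle w v).

(* Fix an acyclic orientation O with L linear extensions and an integer N > n.
   A linear extension s and an n-subset t_1 < ... < t_n of {1, ..., N} label each
   vertex v by f v = t_(s v), a labelling that increases along the arcs.  Stanley's
   transfer map x_v = (f v - max_(u -> v) f u) / N sends it into Stab(G): x is the
   average, over the levels k < N, of the indicator vectors of the sets
   {v | max_(u -> v) f u <= k < f v}, which are stable since an arc u -> v inside
   such a set would give f u <= k < f u.  The transfer map is injective, so Stab(G)
   contains L * C(N, n) points of the grid (1/N) Z^n, whereas a box of sides l_i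
   contains at most prod_i (N l_i + 1) of them.  Dividing by N^n and letting N tend
   to infinity gives L / n! <= the total volume of any finite box cover of Stab(G). *)

From HB Require Import structures.
From Stdlib Require Import Reals Lra.
From mathcomp Require Import all_boot perm zify.

Set Implicit Arguments. Unset Strict Implicit. Unset Printing Implicit Defensive.

HB.instance Definition _ := Monoid.isComLaw.Build R R0 Rplus
  (fun a b c => esym (Rplus_assoc a b c)) Rplus_comm Rplus_0_l.

Section RealSums.
Local Open Scope R_scope.
Variable A : Type.

Lemma sumRE (l : seq A) f : sumR l f = \big[Rplus/R0]_(a <- l) f a.
Proof. by elim: l => [|a l IH]; rewrite ?big_nil ?big_cons //= IH. Qed.

Lemma sumR_ge0 (l : seq A) f : (forall a, 0 <= f a) -> 0 <= sumR l f.
Proof. by move=> f0; elim: l => [|a l IH] /=; [lra | have := f0 a; lra]. Qed.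

Lemma sumR_le (l : seq A) f g : (forall a, f a <= g a) -> sumR l f <= sumR l g.
Proof. by move=> fg; elim: l => [|a l IH] /=; [lra | have := fg a; lra]. Qed.

Lemma sumR_affine (l : seq A) f g c d :
  sumR l (fun a => c * (f a + d * g a)) = c * (sumR l f + d * sumR l g).
Proof. by elim: l => [|a l IH] /=; rewrite ?IH; ring. Qed.

Lemma INR_sumn (l : seq A) (f : A -> nat) :
  INR (sumn [seq f a | a <- l]) = sumR l (fun a => INR (f a)).
Proof. by elim: l => [|a l IH] //=; rewrite plus_INR IH. Qed.

Lemma prodR_ge0 (l : seq A) f : (forall a, 0 <= f a) -> 0 <= prodR l f.
Proof. by move=> f0; elim: l => [|a l IH] /=; [lra | apply: Rmult_le_pos]. Qed.

Lemma prodR_le (l : seq A) f g : (forall a, 0 <= f a) -> (forall a, f a <= g a) ->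
  prodR l f <= prodR l g.
Proof.
move=> f0 fg; elim: l => [|a l IH] /=; first lra.
by apply: Rmult_le_compat => //; apply: prodR_ge0.
Qed.

Lemma eq_prodR (l : seq A) f g : f =1 g -> prodR l f = prodR l g.
Proof. by move=> fg; elim: l => [|a l IH] //=; rewrite IH fg. Qed.

Lemma prodR_scale (l : seq A) f c : prodR l (fun a => c * f a) = c ^ size l * prodR l f.
Proof. by elim: l => [|a l IH] /=; rewrite ?IH; ring. Qed.

Lemma INR_prod_le (l : seq A) (g : A -> nat) f : (forall a, INR (g a) <= f a) ->
  INR (foldr muln 1%N [seq g a | a <- l]) <= prodR l f.
Proof.
move=> gf; elim: l => [|a l IH] /=; first exact: Rle_refl.
by rewrite mult_INR; apply: Rmult_le_compat => //; apply: pos_INR.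
Qed.

Lemma prodR_add_le (l : seq A) f h : (forall a, 0 <= f a) -> 0 <= h <= 1 ->
  prodR l (fun a => f a + h) <= prodR l f + h * (2 ^ size l * prodR l (fun a => f a + 1)).
Proof.
move=> f0 h01; elim: l => [|a l IH] /=; first lra.
have fa0 := f0 a.
have P0 : 0 <= prodR l f := prodR_ge0 l f0.
have PQ : prodR l f <= prodR l (fun a => f a + 1).
  by apply: prodR_le => // b; have := f0 b; lra.
have C1 : 1 <= 2 ^ size l by apply: pow_R1_Rle; lra.
set P := prodR l f in P0 PQ IH *; set Q := prodR l (fun a => f a + 1) in PQ IH *.
set C := 2 ^ size l in C1 IH *.
have CQ : 0 <= C * Q by apply: Rmult_le_pos; lra.
apply: Rle_trans (_ : (f a + h) * (P + h * (C * Q)) <= _).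
  by apply: Rmult_le_compat_l; lra.
change (2 ^ (size l).+1) with (2 * C).
have hCQ : h * (C * Q) <= C * Q by nra.
have faCQ : 0 <= f a * (C * Q) by apply: Rmult_le_pos.
have key : P + f a * (C * Q) + h * (C * Q) <= 2 * C * ((f a + 1) * Q) by nra.
have E : (f a + h) * (P + h * (C * Q)) = f a * P + h * (P + f a * (C * Q) + h * (C * Q)) by ring.
rewrite E; have := Rmult_le_compat_l h _ _ (proj1 h01) key; lra.
Qed.

Lemma INR_sum (I : Type) (r : seq I) (P : pred I) (F : I -> nat) :
  INR (\sum_(i <- r | P i) F i)%N = \big[Rplus/0]_(i <- r | P i) INR (F i).
Proof. exact: (big_morph INR plus_INR (erefl (INR 0))). Qed.

Lemma Rmult_suml (I : Type) (r : seq I) (P : pred I) (F : I -> R) c :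
  (\big[Rplus/0]_(i <- r | P i) F i) * c = \big[Rplus/0]_(i <- r | P i) (F i * c).
Proof. by elim/big_rec2: _ => [|i y1 y2 _ <-]; ring. Qed.

Lemma INR_expn m k : INR (m ^ k)%N = INR m ^ k.
Proof. by elim: k => [|k IH] //=; rewrite expnS mult_INR IH. Qed.

End RealSums.

Lemma card_ord_interval N a b : b <= N -> #|[set k : 'I_N | a <= k < b]| = b - a.
Proof.
move=> bN; rewrite -[b - a]muln1 -sum_nat_const_nat (big_nat_widen _ _ _ _ _ bN).
by rewrite big_geq_mkord cardsE -sum1_card; apply: eq_bigl => k; rewrite andbC.
Qed.

Lemma sum_card_fibres (T U : finType) (g : T -> U) (P : pred U) :
  \sum_(u | P u) #|[set t | g t == u]| = #|[set t | P (g t)]|.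
Proof.
rewrite -sum1_card (partition_big g P) => [|t]; last by rewrite inE.
apply: eq_bigr => u Pu; rewrite -sum1_card; apply: eq_bigl => t.
by rewrite !inE andbC; case: eqP => // ->.
Qed.

Lemma card_le_sum_cover (T : finType) (X : Type) (A : {set T}) (l : seq X) (F : X -> {set T}) :
  (forall t, t \in A -> exists x, List.In x l /\ t \in F x) ->
  #|A| <= sumn [seq #|F x| | x <- l].
Proof.
elim: l A => [|x l IH] A cover /=.
  rewrite leqn0 cards_eq0; apply/eqP/setP => t; rewrite inE.
  by apply/negP => /cover [? []].
rewrite -(cardsID (F x) A) leq_add ?subset_leq_card ?subsetIr //.
apply: IH => t; rewrite inE => /andP [tFx tA].
have [y [[<-|yl] ty]] := cover t tA; first by rewrite ty in tFx.
by exists y.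
Qed.

Section Grid.
Local Open Scope R_scope.
Variables (n N : nat).
Implicit Type bx : ('I_n -> R) * ('I_n -> R).

Definition box_side bx i := Rmax 0 (bx.2 i - bx.1 i).

Definition grid_slice bx i : pred 'I_N.+1 :=
  fun k => Rle_dec (bx.1 i) (INR k / INR N) && Rle_dec (INR k / INR N) (bx.2 i).

Definition grid_box bx : {set {ffun 'I_n -> 'I_N.+1}} := [set y in family (grid_slice bx)].

Definition grid_error bx := 2 ^ n * prodR (enum 'I_n) (fun i => box_side bx i + 1).

Hypothesis N_gt0 : (0 < N)%N.

Lemma card_grid_slice bx i : INR #|grid_slice bx i| <= INR N * box_side bx i + 1.
Proof.
have HN : 0 < INR N by apply/lt_0_INR/ltP.
have side0 : 0 <= INR N * box_side bx i by apply: Rmult_le_pos; [lra | apply: Rmax_l].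
set S := grid_slice bx i.
case: (pickP S) => [k0 Sk0 | S0]; last by rewrite eq_card0 //=; lra.
have [kmin Smin le_min] := arg_minnP (fun k : 'I_N.+1 => val k) Sk0.
have [kmax Smax le_max] := arg_maxnP (fun k : 'I_N.+1 => val k) Sk0.
have span : INR kmax - INR kmin <= INR N * box_side bx i.
  move: Smin Smax => /andP [/sumboolP lo _] /andP [_ /sumboolP hi].
  have scale k : INR k = INR N * (INR k / INR N) by field; lra.
  rewrite (scale kmax) (scale kmin); have := Rmax_r 0 (bx.2 i - bx.1 i).
  rewrite -/(box_side bx i); nra.
have cardS : (#|S| <= kmax.+1 - kmin)%N.
  rewrite -(card_ord_interval kmin (ltn_ord kmax)).
  by apply/subset_leq_card/subsetP => k Sk; rewrite inE ltnS le_min //=; apply: le_max.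
apply: Rle_trans (le_INR _ _ (leP cardS)) _.
rewrite minus_INR ?S_INR; first lra.
by apply/leP; apply: leq_trans (le_min _ Smax) (leqnSn _).
Qed.

Lemma card_grid_box_le bx :
  INR #|grid_box bx| <= INR N ^ n * (box_vol bx + / INR N * grid_error bx).
Proof.
have HN : 1 <= INR N by apply: (le_INR 1); apply/leP.
have prod_slices :
    INR #|grid_box bx| <= prodR (enum 'I_n) (fun i => INR N * box_side bx i + 1).
  by rewrite cardsE card_family; apply: INR_prod_le => i; apply: card_grid_slice.
apply: Rle_trans prod_slices _.
have scale : prodR (enum 'I_n) (fun i => INR N * box_side bx i + 1)
           = INR N ^ n * prodR (enum 'I_n) (fun i => box_side bx i + / INR N).
  by rewrite -[in INR N ^ n](size_enum_ord n) -prodR_scale; apply: eq_prodR => i; field; lra.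
rewrite scale; apply: Rmult_le_compat_l; first by apply: pow_le; lra.
rewrite /box_vol /grid_error -[in 2 ^ n](size_enum_ord n).
apply: prodR_add_le => [i|]; first exact: Rmax_l.
split; first by apply/Rlt_le/Rinv_0_lt_compat; lra.
by rewrite -Rinv_1; apply: Rinv_le_contravar; lra.
Qed.

End Grid.

Section Transfer.
Variables (n : nat) (O : {set 'I_n * 'I_n}).
Implicit Types (f g : 'I_n -> nat).

Definition in_max f v := \max_(u | (u, v) \in O) f u.

Definition arc_increasing f := forall u v, (u, v) \in O -> f u < f v.

Definition transfer f v := f v - in_max f v.

Definition level f k := [set v | in_max f v <= k < f v].

Lemma in_max_le f v : arc_increasing f -> in_max f v <= f v.
Proof. by move=> f_incr; apply/bigmax_leqP => u uv; apply/ltnW/f_incr. Qed.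

Lemma transfer_inj f g : arc_increasing f -> arc_increasing g ->
  transfer f =1 transfer g -> f =1 g.
Proof.
move=> f_incr g_incr fg v; elim: {v}(f v).+1 {-2}v (ltnSn (f v)) => [//|k IH] v fv.
have max_eq : in_max f v = in_max g v.
  by apply: eq_bigr => u uv; apply: IH; apply: leq_trans (f_incr _ _ uv) _.
rewrite -(subnK (in_max_le v f_incr)) -(subnK (in_max_le v g_incr)).
by rewrite -/(transfer f v) -/(transfer g v) fg max_eq.
Qed.

Lemma card_level_mem f N v : f v <= N -> #|[set k : 'I_N | v \in level f k]| = transfer f v.
Proof.
move=> fvN; rewrite /transfer -(card_ord_interval (in_max f v) fvN).
by apply: eq_card => k; rewrite !inE.
Qed.

Variable e : rel 'I_n.
Hypothesis O_orients_e : forall u v, e u v -> ((u, v) \in O) || ((v, u) \in O).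

Lemma level_stable f k : stable e (level f k).
Proof.
apply/forall_inP => x xk; apply/forall_inP => y yk; apply/negP => /O_orients_e.
move: xk yk; rewrite !inE => /andP [xmax xf] /andP [ymax yf].
case/orP => [xy | yx].
- by have : f x <= in_max f y := @leq_bigmax_cond _ (fun u => (u, y) \in O) f x xy; lia.
- by have : f y <= in_max f x := @leq_bigmax_cond _ (fun u => (u, x) \in O) f y yx; lia.
Qed.

Lemma transfer_in_Stab f N : (0 < N)%N -> (forall v, f v <= N) ->
  in_Stab e (fun v => Rdiv (INR (transfer f v)) (INR N)).
Proof.
move=> N_gt0 fN; have HN : Rlt 0 (INR N) by apply/lt_0_INR/ltP.
pose c I := #|[set k : 'I_N | level f k == I]|.
have sumR_div (P : pred {set 'I_n}) :
    sumR (enum {set 'I_n}) (fun I => if P I then Rdiv (INR (c I)) (INR N) else R0)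
  = Rdiv (INR #|[set k : 'I_N | P (level f k)]|) (INR N).
  rewrite sumRE big_enum -big_mkcond /= /Rdiv -Rmult_suml -INR_sum.
  by rewrite sum_card_fibres.
exists (fun I => Rdiv (INR (c I)) (INR N)); split; [|split; [|split]].
- by move=> I; apply: Rmult_le_pos; [apply: pos_INR | apply/Rlt_le/Rinv_0_lt_compat].
- move=> I unstable_I; rewrite /c eq_card0 ?Rdiv_0_l // => k; rewrite inE.
  by apply: contraNF unstable_I => /eqP <-; apply: level_stable.
- rewrite (sumR_div predT) /=.
  have -> : #|[set k : 'I_N | true]| = N by rewrite cardsT card_ord.
  by field; lra.
- by move=> v; rewrite (sumR_div (fun I => v \in I)) card_level_mem.
Qed.

End Transfer.

Lemma sorted_ltn_tnth n N (t : n.-tuple 'I_N) (i j : 'I_n) :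
  sorted ltn (map val t) -> i < j -> tnth t i < tnth t j.
Proof.
move=> t_sorted ij; have tnthE k : (tnth t k : nat) = nth 0 (map val t) k.
  by rewrite (tnth_nth (tnth t k)) -(nth_map (tnth t k) 0) // size_tuple.
by rewrite !tnthE; apply: (sorted_ltn_nth ltn_trans) => //; rewrite inE size_map size_tuple.
Qed.

Lemma tnth_perm_inj n N (s s' : {perm 'I_n}) (t t' : n.-tuple 'I_N) :
  sorted ltn (map val t) -> sorted ltn (map val t') ->
  (forall v, tnth t (s v) = tnth t' (s' v)) -> s = s' /\ t = t'.
Proof.
move=> t_sorted t'_sorted tst'.
have tt' : t = t'.
  apply/val_inj/(inj_map val_inj)/(irr_sorted_eq ltn_trans ltnn t_sorted t'_sorted) => x.
  apply/mapP/mapP => [[_ /tnthP [i ->] ->] | [_ /tnthP [i ->] ->]].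
    by exists (tnth t' (s' ((s^-1)%g i))); rewrite ?mem_tnth // -tst' permKV.
  by exists (tnth t (s ((s'^-1)%g i))); rewrite ?mem_tnth // tst' permKV.
split=> //; subst t'; apply/permP => v; apply/val_inj/eqP.
have t_uniq : uniq t.
  by have := sorted_uniq ltn_trans ltnn t_sorted; rewrite (map_inj_uniq val_inj).
by rewrite -(nth_uniq (tnth t (s v)) _ _ t_uniq) ?size_tuple ?ltn_ord // -!tnth_nth tst'.
Qed.

Section GridPoints.
Variables (n : nat) (O : {set 'I_n * 'I_n}).
Hypothesis O_acyclic : forall u v, (u, v) \in O -> ~~ connect (arcs_rel O) v u.

Lemma arc_ind_lt u v : (u, v) \in O -> ind_lt O u v.
Proof.
move=> uv; rewrite /ind_lt connect1 // andbT.
by apply: contraNneq (O_acyclic uv) => ->; apply: connect0.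
Qed.

Definition linext_set :=
  [set s : {perm 'I_n} | [forall u, forall v, ind_lt O u v ==> (s u < s v)]].

Definition increasing_tuples N := [set t : n.-tuple 'I_N | sorted ltn (map val t)].

Variable N : nat.
Implicit Type p : {perm 'I_n} * n.-tuple 'I_N.

Definition labelling p v := (tnth p.2 (p.1 v)).+1.

Definition grid_point p : {ffun 'I_n -> 'I_N.+1} :=
  [ffun v => inord (transfer O (labelling p) v)].

Lemma labelling_le p v : labelling p v <= N.
Proof. exact: ltn_ord. Qed.

Lemma labelling_increasing p : p \in setX linext_set (increasing_tuples N) ->
  arc_increasing O (labelling p).
Proof.
case: p => s t; rewrite in_setX !inE /= => /andP [/forallP s_linext t_sorted] u v uv.
rewrite ltnS; apply: sorted_ltn_tnth => //.
by apply: (implyP (forallP (s_linext u) v)); apply: arc_ind_lt.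
Qed.

Lemma grid_pointE p v : grid_point p v = transfer O (labelling p) v :> nat.
Proof. by rewrite ffunE inordK // ltnS; apply: leq_trans (leq_subr _ _) (labelling_le _ _). Qed.

Lemma grid_point_inj : {in setX linext_set (increasing_tuples N) &, injective grid_point}.
Proof.
move=> [s t] [s' t'] p_in p'_in same_point.
have same_label : labelling (s, t) =1 labelling (s', t').
  apply: (@transfer_inj _ O); try exact: labelling_increasing.
  by move=> v; rewrite -!grid_pointE same_point.
move: p_in p'_in; rewrite !in_setX !inE /= => /andP [_ t_sorted] /andP [_ t'_sorted].
have [-> ->] // : s = s' /\ t = t'.
apply: tnth_perm_inj => // v; apply: val_inj.
by have := same_label v; rewrite /labelling /=; case.
Qed.

Lemma card_grid_points :
  #|grid_point @: setX linext_set (increasing_tuples N)| = n_linext O * 'C(N, n).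
Proof. by rewrite (card_in_imset grid_point_inj) cardsX card_ltn_sorted_tuples. Qed.

End GridPoints.

Section AcyclicOrientation.
Variables (n : nat) (e : rel 'I_n) (O : {set 'I_n * 'I_n}).
Hypothesis O_acyclic_orientation : acyclic_orientation e O.

Lemma acyclic_orientation_orients u v : e u v -> ((u, v) \in O) || ((v, u) \in O).
Proof.
case/andP: O_acyclic_orientation => /andP [_ /forallP orients] _ uv.
by move: (implyP (forallP (orients u) v) uv); case: ((u, v) \in O); case: ((v, u) \in O).
Qed.

Lemma acyclic_orientation_acyclic u v : (u, v) \in O -> ~~ connect (arcs_rel O) v u.
Proof.
case/andP: O_acyclic_orientation => _ /forallP acyclic uv.
exact: (implyP (forallP (acyclic u) v)).
Qed.

Lemma linext_binomial_le_cover N (l : seq (('I_n -> R) * ('I_n -> R))) : (0 < N)%N ->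
  (forall x, in_Stab e x -> exists bx, List.In bx l /\ in_box bx x) ->
  n_linext O * 'C(N, n) <= sumn [seq #|grid_box N bx| | bx <- l].
Proof.
move=> N_gt0 cover; rewrite -(card_grid_points acyclic_orientation_acyclic).
apply: card_le_sum_cover => _ /imsetP [p p_in ->].
have [bx [bx_l x_in]] := cover _ (transfer_in_Stab acyclic_orientation_orients N_gt0
  (labelling_le p)).
exists bx; split=> //; rewrite inE; apply/familyP => i; rewrite unfold_in /= grid_pointE.
by have [lo hi] := x_in i; apply/andP; split; apply/sumboolP.
Qed.

End AcyclicOrientation.

Section Asymptotics.
Local Open Scope R_scope.

Lemma nonpos_of_linear_bound d K n0 : (forall N, (n0 <= N)%N -> INR N * d <= K) -> d <= 0.
Proof.
move=> bound; apply: Rnot_lt_le => d_pos.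
have [m Km] := INR_unbounded (K / d).
have := bound (m + n0)%N (leq_addl m n0); rewrite plus_INR.
have : K < INR m * d.
  have -> : K = K / d * d by field; lra.
  by apply: Rmult_lt_compat_r.
have := pos_INR n0; nra.
Qed.

Lemma pow_sub_ge a b k : 0 <= b <= a -> a ^ k.+1 - INR k * b * a ^ k <= a * (a - b) ^ k.
Proof.
move=> ba; elim: k => [|k IH]; first by simpl; lra.
rewrite S_INR; simpl pow in *.
have ak0 : 0 <= a ^ k by apply: pow_le; lra.
have step := Rmult_le_compat_l (a - b) _ _ ltac:(lra) IH.
have : 0 <= INR k * b * b * a ^ k by apply: Rmult_le_pos => //; have := pos_INR k; nra.
nra.
Qed.

Lemma le_of_asymptotic_bound n x V K : 0 <= x ->
  (forall N, (n < N)%N -> x * (INR N - INR n) ^ n <= INR N ^ n * (V + / INR N * K)) -> x <= V.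
Proof.
(* Bernoulli's inequality turns the bound into N (x - V) <= K + x n^2. *)
move=> x0 bound; suff : x - V <= 0 by lra.
apply: (@nonpos_of_linear_bound _ (K + x * (INR n * INR n)) n.+1) => N nN.
set a := INR N; set b := INR n.
have ba : 0 <= b <= a by split; [apply: pos_INR | apply/le_INR/leP/ltnW].
have a_pos : 0 < a by have := pos_INR n; have := lt_INR _ _ (ltP nN); rewrite -/a -/b; lra.
have an_pos : 0 < a ^ n by apply: pow_lt.
have lower := pow_sub_ge n ba; change (a ^ n.+1) with (a * a ^ n) in lower.
have upper := Rmult_le_compat_l a _ _ (Rlt_le _ _ a_pos) (bound N nN).
rewrite -/a -/b in upper.
have key : a ^ n * (x * (a - b * b)) <= a ^ n * (a * V + K).
  have -> : a ^ n * (x * (a - b * b)) = x * (a * a ^ n - INR n * b * a ^ n) by rewrite /b; ring.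
  have <- : a * (a ^ n * (V + / a * K)) = a ^ n * (a * V + K) by field; lra.
  apply: Rle_trans upper; have := Rmult_le_compat_l x _ _ x0 lower; lra.
have := Rmult_le_reg_l _ _ _ an_pos key; lra.
Qed.

End Asymptotics.

Lemma pow_sub_le_ffact N n : (N - n) ^ n <= N ^_ n.
Proof.
rewrite ffact_prod -[in X in X <= _](card_ord n) -prod_nat_const.
by apply: leq_prod => i _; rewrite card_ord leq_sub2l // ltnW.
Qed.

Section Volume.
Local Open Scope R_scope.

Lemma linext_le_cover n (e : rel 'I_n) (O : {set 'I_n * 'I_n})
    (l : seq (('I_n -> R) * ('I_n -> R))) :
  acyclic_orientation e O ->
  (forall x, in_Stab e x -> exists bx, List.In bx l /\ in_box bx x) ->
  INR (n_linext O) / INR n`! <= sumR l (@box_vol n).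
Proof.
move=> O_acyc cover; have F_pos : 0 < INR n`! by apply/lt_0_INR/ltP/fact_gt0.
have ratio_ge0 : 0 <= INR (n_linext O) / INR n`!.
  by apply: Rmult_le_pos (pos_INR _) (Rlt_le _ _ (Rinv_0_lt_compat _ F_pos)).
apply: (@le_of_asymptotic_bound n _ _ (sumR l (@grid_error n))) => // N nN.
have N_gt0 : (0 < N)%N by apply: leq_trans nN.
have pow_le_binomial : (INR N - INR n) ^ n <= INR 'C(N, n) * INR n`!.
  rewrite -minus_INR; last by apply/leP/ltnW.
  by rewrite -INR_expn -mult_INR multE bin_ffact; apply/le_INR/leP/pow_sub_le_ffact.
apply: Rle_trans (_ : _ <= INR (n_linext O * 'C(N, n))) _.
  rewrite mult_INR (_ : INR (n_linext O) * INR 'C(N, n)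
                      = INR (n_linext O) / INR n`! * (INR 'C(N, n) * INR n`!)); last by field; lra.
  exact: Rmult_le_compat_l ratio_ge0 pow_le_binomial.
apply: Rle_trans (le_INR _ _ (leP (linext_binomial_le_cover O_acyc N_gt0 cover))) _.
by rewrite INR_sumn -sumR_affine; apply: sumR_le => bx; apply: card_grid_box_le.
Qed.

Lemma linext_le_volume n (e : rel 'I_n) (O : {set 'I_n * 'I_n}) v :
  acyclic_orientation e O -> is_volume (in_Stab e) v -> INR (n_linext O) <= INR n`! * v.
Proof.
move=> O_acyc [_ v_greatest]; have F_pos : 0 < INR n`! by apply/lt_0_INR/ltP/fact_gt0.
have : INR (n_linext O) / INR n`! <= v.
  by apply: v_greatest => _ [l [cover ->]]; apply: linext_le_cover O_acyc cover.
move=> /(Rmult_le_compat_l _ _ _ (Rlt_le _ _ F_pos)).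
by rewrite (_ : INR n`! * (INR (n_linext O) / INR n`!) = INR (n_linext O)) //; field; lra.
Qed.

Lemma volume_ge0 n (S : ('I_n -> R) -> Prop) v : is_volume S v -> 0 <= v.
Proof.
move=> [_ v_greatest]; apply: v_greatest => _ [l [_ ->]].
by apply: sumR_ge0 => bx; apply: prodR_ge0 => i; apply: Rmax_l.
Qed.

End Volume.

Theorem mainTheorem7 (n : nat) (e : rel 'I_n) (v : R) :
  simple_graph e ->
  is_volume (in_Stab e) v ->
  Rle (INR (eps e)) (Rmult (INR (n`!)) v).
Proof.
move=> _ v_vol; rewrite /eps.
have [no_orientation | has_orientation] := posnP #|[pred O | acyclic_orientation e O]|.
  rewrite big_pred0 => [|O]; last by have := card0_eq no_orientation O.
  by apply: Rmult_le_pos (pos_INR _) (volume_ge0 v_vol).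
have [O O_acyc ->] := eq_bigmax_cond (fun O => n_linext O) has_orientation.
exact: linext_le_volume O_acyc v_vol.
Qed.
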